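(* Let $n>2$ be an integer and $M\in\mathrm{Mat}(2,\mathbb{Z})$ with $\det(M)\equiv-1\pmod n$, and suppose $M$ is reversible mod $n$. Then $M^2\equiv\mathbb{1}\pmod n$ if $n$ is odd, and $M^2\equiv\mathbb{1}\pmod{n/2}$ if $n$ is even.
   Context: An integer matrix $M$ whose determinant is a unit mod $n$ is reversible mod $n$ if there exists $R\in\mathrm{GL}(2,\mathbb{Z}/n\mathbb{Z})$ with $RMR^{-1}\equiv M^{-1}\pmod n$, where $M^{-1}$ is the inverse of $M$ over $\mathbb{Z}/n\mathbb{Z}$. *)

From HB Require Import structures.
From mathcomp Require Import all_boot all_order all_algebra.
Set Implicit Arguments. Unset Strict Implicit. Unset Printing Implicit Defensive.
Import Order.TTheory GRing.Theory Num.Theory.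
Local Open Scope ring_scope.

(* Reduction of an integer 2x2 matrix modulo n, as a matrix over 'Z_n.
   (Only used with 1 < n, where 'Z_n is Z/nZ.) *)
Definition mx_mod (n : nat) (M : 'M[int]_2) : 'M['Z_n]_2 :=
  map_mx (fun z : int => z%:~R) M.

Definition reversible_mod (n : nat) (M : 'M[int]_2) : Prop :=
  exists R : 'M['Z_n]_2,
    R \in unitmx /\ R *m mx_mod n M *m invmx R = invmx (mx_mod n M).

From HB Require Import structures.
From mathcomp Require Import all_boot all_order all_algebra.
From mathcomp Require Import ring.
Set Implicit Arguments.
Unset Strict Implicit.
Unset Printing Implicit Defensive.

Import Order.TTheory GRing.Theory Num.Theory.
Local Open Scope ring_scope.

(* Reduce M mod n to A with det A = -1.  Conjugation preserves the trace, so
   reversibility gives tr A^-1 = tr A, while Cayley-Hamilton for 2x2 matrices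
   gives det A * tr A^-1 = tr A, i.e. tr A^-1 = -tr A.  Hence n | 2 tr M.
   Over the integers Cayley-Hamilton reads M^2 - 1 = (tr M) M - (det M + 1),
   and both terms vanish mod n (n odd) or mod n/2 (n even). *)

Section TwoByTwo.

Variable R : comNzRingType.
Implicit Types A B : 'M[R]_2.

Lemma ord2P (i : 'I_2) : i = 0 \/ i = 1.
Proof. by case: i => [[|[|k]]] Hi; [left; apply: val_inj | right; apply: val_inj |]. Qed.

Lemma ord2E : (ord0 = 0 :> 'I_2) * (lift ord0 ord0 = 1 :> 'I_2) * (lift 1 0 = 0 :> 'I_2).
Proof. by do !split; apply: val_inj. Qed.

Lemma mulmx2E A B i j : (A *m B) i j = A i 0 * B 0 j + A i 1 * B 1 j.
Proof. by rewrite mxE !big_ord_recl big_ord0 addr0 !ord2E. Qed.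

Lemma mxtrace2 A : \tr A = A 0 0 + A 1 1.
Proof. by rewrite /mxtrace !big_ord_recl big_ord0 addr0 !ord2E. Qed.

Lemma det2 A : \det A = A 0 0 * A 1 1 - A 0 1 * A 1 0.
Proof.
rewrite (expand_det_row _ 0) !big_ord_recl big_ord0 addr0 /cofactor !det_mx11.
by rewrite !mxE /= expr0 expr1 mul1r mulN1r mulrN !ord2E.
Qed.

Lemma Cayley_Hamilton2 A : A *m A = \tr A *: A - (\det A)%:M.
Proof.
apply/matrixP => i j; rewrite mulmx2E !mxE mxtrace2 det2.
by case: (ord2P i) => ->; case: (ord2P j) => -> /=; ring.
Qed.

End TwoByTwo.

Lemma det_mul_mxtrace_invmx2 (R : comUnitRingType) (A : 'M[R]_2) :
  A \in unitmx -> \det A * \tr (invmx A) = \tr A.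
Proof.
move=> Aunit; have := congr1 mxtrace (mulmxK Aunit A).
rewrite Cayley_Hamilton2 mulmxBl -scalemxAl mulmxV // mul_scalar_mx.
rewrite linearB !linearZ /= mxtrace1 => trA.
by apply: (addrI (\tr A)); rewrite -{1}trA; ring.
Qed.

Lemma mxtrace_conj (R : comUnitRingType) n (P A : 'M[R]_n) :
  P \in unitmx -> \tr (P *m A *m invmx P) = \tr A.
Proof. by move=> Punit; rewrite mxtrace_mulC mulmxA mulVmx ?mul1mx. Qed.

Lemma reversible_mxtrace2 (R : comUnitRingType) (A P : 'M[R]_2) :
  \det A = -1 -> P \in unitmx -> P *m A *m invmx P = invmx A ->
  \tr A *+ 2 = 0.
Proof.
move=> detA Punit PAP.
have Aunit : A \in unitmx by rewrite unitmxE detA unitrN unitr1.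
have trV : \tr (invmx A) = \tr A by rewrite -PAP mxtrace_conj.
have := det_mul_mxtrace_invmx2 Aunit; rewrite detA trV mulN1r => /eqP.
by rewrite eq_sym -subr_eq0 opprK -mulr2n => /eqP.
Qed.

Lemma intr_Zp_eq0 n (z : int) : (1 < n)%N -> (z%:~R : 'Z_n) = 0 -> (n %| z)%Z.
Proof.
move=> n_gt1.
have natP k : (k%:R : 'Z_n) = 0 -> (n %| k)%N.
  by move=> k0; have := val_Zp_nat n_gt1 k; rewrite k0 => /esym/eqP.
case: z => k; first by rewrite -pmulrn => /natP.
by rewrite NegzE mulrNz => /eqP; rewrite oppr_eq0 -pmulrn => /eqP /natP.
Qed.

Lemma intr_Zp_mod n (z w : int) : (1 < n)%N -> (z = w %[mod n])%Z ->
  (z%:~R : 'Z_n) = w%:~R.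
Proof.
move=> n_gt1 /eqP; rewrite eqz_mod_dvd => /dvdzP [q Hq].
apply/eqP; rewrite -subr_eq0 -rmorphB /= Hq intrM.
by rewrite -[(n%:Z)%:~R]pmulrn pchar_Zp // mulr0.
Qed.

Lemma mx2_sqr_eq1_mod (d : nat) (M : 'M[int]_2) :
  (d %| \tr M)%Z -> (d %| \det M + 1)%Z ->
  forall i j, ((M *m M) i j = (1%:M : 'M[int]_2) i j %[mod d])%Z.
Proof.
move=> dtr ddet i j; apply/eqP; rewrite eqz_mod_dvd Cayley_Hamilton2 !mxE.
have -> : \tr M * M i j - \det M *+ (i == j) - (i == j)%:R
          = \tr M * M i j - (\det M + 1) *+ (i == j) by case: (i == j); ring.
by rewrite rpredB ?rpredMn ?dvdz_mulr.
Qed.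

Theorem corollary4p10 (n : nat) (M : 'M[int]_2) :
  (2 < n)%N ->
  (\det M = -1 %[mod n])%Z ->
  reversible_mod n M ->
  (~~ odd n -> forall i j : 'I_2,
     ((M *m M) i j = (1%:M : 'M[int]_2) i j %[mod (n %/ 2)%N])%Z) /\
  (odd n -> forall i j : 'I_2,
     ((M *m M) i j = (1%:M : 'M[int]_2) i j %[mod n])%Z).
Proof.
move=> /ltnW n_gt1 hdet [P [Punit hP]].
have detA : \det (mx_mod n M) = -1.
  by rewrite /mx_mod det_map_mx /= (intr_Zp_mod n_gt1 hdet).
have n_tr2 : (n %| \tr M * 2)%Z.
  have := reversible_mxtrace2 detA Punit hP; rewrite /mx_mod trace_map_mx /=.
  by move=> tr2; apply: intr_Zp_eq0 => //; rewrite intrM -tr2 mulr_natr.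
have n_det : (n %| \det M + 1)%Z by move/eqP: hdet; rewrite eqz_mod_dvd opprK.
split=> [even_n | odd_n].
- have n2 : n%:Z = ((n %/ 2) * 2)%N by rewrite divnK ?dvdn2.
  apply: mx2_sqr_eq1_mod.
  + by move: n_tr2; rewrite n2 PoszM dvdz_mul2r.
  + by apply: dvdz_trans n_det; rewrite n2 PoszM dvdz_mulr.
- apply: mx2_sqr_eq1_mod n_det.
  by move: n_tr2; rewrite mulrC Gauss_dvdzr // coprimezE /= coprimen2.
Qed.
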